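(* Let $(Z,Z_{ac})$ be an accretive matrix-ordered vector space and let $((V,V_{ac}),\phi)$ be a $*$-closure of $(Z,Z_{ac})$. Then for all $n$ and $x,y\in M_n(Z)$: (i) $\phi^{(n)}(x)+\phi^{(n)}(y)^*\in V_{ac}^n$ if and only if $x+y\in Z_{ac}^n$; (ii) $\phi^{(n)}(x)+\phi^{(n)}(y)^*=0$ if and only if $x,y\in\operatorname{span}_{\mathbb{C}}Z_{sa}^n$ and $y=-x^*$.
   Context: For a complex vector space $Z$, $M_n(Z)$ is the $n\times n$ matrices over $Z$. A cone is a set $C$ with $C+C\subseteq C$, $tC\subseteq C$ ($t\ge0$). A matrix cone is a sequence of cones $C_n\subseteq M_n(Z)$ with $X^*C_nX\subseteq C_k$ for all scalar $X\in M_{n,k}$; it is $\mathbb{C}$-proper if $C_1\cap-C_1\cap iC_1\cap-iC_1=\{0\}$, and then $(Z,Z_{ac})$, $Z_{ac}=\{Z_{ac}^n\}$, is an accretive matrix-ordered vector space, with $Z_{sa}^n=iZ_{ac}^n\cap-iZ_{ac}^n$ and $Z_+^n=Z_{sa}^n\cap Z_{ac}^n$. For $W=\operatorname{span}_{\mathbb{C}}Z_{sa}^1$, one has $\operatorname{span}_{\mathbb{C}}Z_{sa}^n=M_n(W)$ and there is a unique conjugate-linear involution $*$ on $M_n(W)$ fixing each element of $Z_{sa}^n$, given by $[z_{kl}]^*=[z_{lk}^*]$; this defines $x^*$ in (ii). $(Z,Z_{ac})$ is self-adjoint if $Z=\operatorname{span}_{\mathbb{C}}Z_{sa}^1$ (so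 $Z$ itself carries this involution). A linear map $\phi$ is real-completely positive if $\phi^{(n)}(Z_{ac}^n)\subseteq V_{ac}^n$ for all $n$ ($\phi^{(n)}$ = entrywise application); a real-complete order embedding if injective and both $\phi$ and $\phi^{-1}$ (on the range) are real-completely positive. A $*$-closure of $(Z,Z_{ac})$ is a pair $((V,V_{ac}),\phi)$ with $(V,V_{ac})$ a self-adjoint accretive matrix-ordered vector space, $\phi:Z\to V$ a real-complete order embedding, and $V=\phi(Z)+\phi(Z)^*$ with respect to the involution of $V$. *)

From HB Require Import structures.
From mathcomp Require Import all_boot all_order all_algebra.
From Stdlib Require Import ClassicalEpsilon.
Set Implicit Arguments. Unset Strict Implicit. Unset Printing Implicit Defensive.
Import Order.TTheory GRing.Theory Num.Theory.
Local Open Scope ring_scope.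

Section AMOS.
Variables (C : numClosedFieldType) (Z : lmodType C).

Definition mscale m n (c : C) (x : 'M[Z]_(m, n)) : 'M[Z]_(m, n) :=
  map_mx (fun z => c *: z) x.

(* X^* x X for a scalar matrix X in M_{n,k}(C) and x in M_n(Z) *)
Definition conj_act n k (X : 'M[C]_(n, k)) (x : 'M[Z]_n) : 'M[Z]_k :=
  \matrix_(i, j) \sum_(p < n) \sum_(q < n) ((Num.conj (X p i)) * X q j) *: x p q.

(* A "matrix family" of subsets: level n.+1 is a subset of M_{n+1}(Z)
   (so index n represents matrix size n+1; sizes range over n >= 1). *)
Definition mfam := forall n : nat, 'M[Z]_n.+1 -> Prop.

Definition is_cone n (P : 'M[Z]_n.+1 -> Prop) : Prop :=
  (forall x y, P x -> P y -> P (x + y)) /\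
  (forall (t : C) x, 0 <= t -> P x -> P (mscale t x)).

Definition matrix_cone (K : mfam) : Prop :=
  (forall n, is_cone (K n)) /\
  (forall n k (X : 'M[C]_(n.+1, k.+1)) x, K n x -> K k (conj_act X x)).

Definition smul_set n (t : C) (P : 'M[Z]_n.+1 -> Prop) (x : 'M[Z]_n.+1) : Prop :=
  exists c, P c /\ x = mscale t c.

Definition C_proper (K : mfam) : Prop :=
  forall x : 'M[Z]_1,
    K 0%N x -> smul_set (-1) (K 0%N) x -> smul_set 'i (K 0%N) x ->
    smul_set (- 'i) (K 0%N) x -> x = 0.

Definition accretive_mos (K : mfam) : Prop := matrix_cone K /\ C_proper K.

Definition Zsa (K : mfam) n (x : 'M[Z]_n.+1) : Prop :=
  smul_set 'i (K n) x /\ smul_set (- 'i) (K n) x.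

Definition Cspan n (P : 'M[Z]_n.+1 -> Prop) (x : 'M[Z]_n.+1) : Prop :=
  exists (k : nat) (c : 'I_k -> C) (v : 'I_k -> 'M[Z]_n.+1),
    (forall i, P (v i)) /\ x = \sum_(i < k) mscale (c i) (v i).

(* The involution on span_C Z_sa^n: the unique conjugate-linear map fixing
   Z_sa^n, i.e. a + i b |-> a - i b for a, b in Z_sa^n (Z_sa^n is a real
   subspace, so span_C Z_sa^n = Z_sa^n + i Z_sa^n). Outside span_C Z_sa^n
   the value is irrelevant (chosen to be x). *)
Definition adj (K : mfam) n (x : 'M[Z]_n.+1) : 'M[Z]_n.+1 :=
  match excluded_middle_informative
          (exists ab : 'M[Z]_n.+1 * 'M[Z]_n.+1,
             Zsa K ab.1 /\ Zsa K ab.2 /\ x = ab.1 + mscale 'i ab.2) with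
  | left h => let ab := proj1_sig (constructive_indefinite_description _ h) in
              ab.1 - mscale 'i ab.2
  | right _ => x
  end.

(* self-adjoint: Z = span_C Z_sa^1 (identifying Z with M_1(Z)) *)
Definition self_adjoint (K : mfam) : Prop :=
  forall z : Z, Cspan (Zsa K (n:=0%N)) (const_mx z : 'M[Z]_1).

End AMOS.

Section Maps.
Variables (C : numClosedFieldType) (Z V : lmodType C).

Definition real_cp (Zac : mfam Z) (Vac : mfam V) (phi : Z -> V) : Prop :=
  forall n (x : 'M[Z]_n.+1), Zac n x -> Vac n (map_mx phi x).

Definition real_coe (Zac : mfam Z) (Vac : mfam V) (phi : Z -> V) : Prop :=
  injective phi /\ real_cp Zac Vac phi /\
  (forall n (x : 'M[Z]_n.+1), Vac n (map_mx phi x) -> Zac n x).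

Definition star_closure (Zac : mfam Z) (Vac : mfam V) (phi : {linear Z -> V}) : Prop :=
  accretive_mos Vac /\ self_adjoint Vac /\ real_coe Zac Vac phi /\
  (forall v : V, exists z1 z2 : Z,
      (const_mx v : 'M[V]_1) =
      const_mx (phi z1) + adj Vac (n:=0%N) (const_mx (phi z2))).
End Maps.

From HB Require Import structures.
From mathcomp Require Import all_boot all_order all_algebra ring.
From Stdlib Require Import ClassicalEpsilon.
Import Order.TTheory GRing.Theory Num.Theory.
Local Open Scope ring_scope.

(* Z_sa^n is a real subspace of M_n(Z) stable under compressions X^* . X, and
   C-properness at level 1 propagates to every level by polarization, so Z_sa^n and
   i Z_sa^n meet only in 0.  Hence each w in span_C Z_sa^n has a unique Cartesian
   decomposition w = a + i b, and w^* = a - i b.  As i b and -i b both lie in the cone,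
   adding w or w^* to a matrix does not change its membership in the cone, which gives (i).
   For (ii), phi x = -(phi y)^* means that phi (x - y) and i phi (x + y) lie in V_sa, hence
   x - y and i (x + y) lie in Z_sa because phi is a real-complete order embedding; these are
   twice the real part and minus twice the imaginary part of x.  Self-adjointness of V is
   needed to decompose phi y, which again follows by polarization, entry by entry. *)

Set Implicit Arguments.
Unset Strict Implicit.
Unset Printing Implicit Defensive.

Section MatrixScale.
Variables (C : numClosedFieldType) (W : lmodType C).

Lemma mscaleDr m n c (x y : 'M[W]_(m, n)) :
  mscale c (x + y) = mscale c x + mscale c y.
Proof. by apply/matrixP=> i j; rewrite !mxE scalerDr. Qed.

Lemma mscaleDl m n c d (x : 'M[W]_(m, n)) :
  mscale (c + d) x = mscale c x + mscale d x.
Proof. by apply/matrixP=> i j; rewrite !mxE scalerDl. Qed.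

Lemma mscaleA m n c d (x : 'M[W]_(m, n)) :
  mscale c (mscale d x) = mscale (c * d) x.
Proof. by apply/matrixP=> i j; rewrite !mxE scalerA. Qed.

Lemma mscale1 m n (x : 'M[W]_(m, n)) : mscale 1 x = x.
Proof. by apply/matrixP=> i j; rewrite !mxE scale1r. Qed.

Lemma mscaleN1 m n (x : 'M[W]_(m, n)) : mscale (-1) x = - x.
Proof. by apply/matrixP=> i j; rewrite !mxE scaleN1r. Qed.

Lemma mscalerN m n c (x : 'M[W]_(m, n)) : mscale c (- x) = - mscale c x.
Proof. by apply/matrixP=> i j; rewrite !mxE scalerN. Qed.

Lemma mscaleNr m n c (x : 'M[W]_(m, n)) : mscale (- c) x = - mscale c x.
Proof. by apply/matrixP=> i j; rewrite !mxE scaleNr. Qed.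

Lemma mscaler0 m n c : mscale c (0 : 'M[W]_(m, n)) = 0.
Proof. by apply/matrixP=> i j; rewrite !mxE scaler0. Qed.

Lemma mscale0 m n (x : 'M[W]_(m, n)) : mscale 0 x = 0.
Proof. by apply/matrixP=> i j; rewrite !mxE scale0r. Qed.

Lemma mscale_half m n (x : 'M[W]_(m, n)) : mscale 2^-1 (x + x) = x.
Proof. by rewrite -{1 2}(mscale1 x) -mscaleDl mscaleA mulVf ?mscale1 ?pnatr_eq0. Qed.

Lemma conj_act_mscale k l (X : 'M[C]_(k, l)) t (x : 'M[W]_k) :
  conj_act X (mscale t x) = mscale t (conj_act X x).
Proof.
apply/matrixP=> i j; rewrite !mxE scaler_sumr; apply: eq_bigr => p _.
by rewrite scaler_sumr; apply: eq_bigr => q _; rewrite !mxE !scalerA mulrC.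
Qed.

Lemma sum_delta_scale m (g : 'I_m -> W) p : \sum_r ((r == p)%:R : C) *: g r = g p.
Proof.
rewrite (bigD1 p) //= eqxx scale1r big1 ?addr0 // => r /negbTE ->.
by rewrite scale0r.
Qed.

End MatrixScale.

Lemma mulrNii (C : numClosedFieldType) : 'i * - 'i = 1 :> C.
Proof. by rewrite mulrN -expr2 sqrCi opprK. Qed.

Lemma mulNrii (C : numClosedFieldType) : - 'i * 'i = 1 :> C.
Proof. by rewrite mulNr -expr2 sqrCi opprK. Qed.

Section Polarization.
Variables (C : numClosedFieldType) (W : lmodType C) (n : nat) (h : 'M[W]_n).

Definition sesq (f g : 'I_n -> C) : W :=
  \sum_p \sum_q (Num.conj (f p) * g q) *: h p q.

Lemma sesqDl f1 f2 g : sesq (fun p => f1 p + f2 p) g = sesq f1 g + sesq f2 g.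
Proof.
rewrite /sesq -big_split; apply: eq_bigr => p _; rewrite -big_split.
by apply: eq_bigr => q _; rewrite rmorphD mulrDl scalerDl.
Qed.

Lemma sesqDr f g1 g2 : sesq f (fun q => g1 q + g2 q) = sesq f g1 + sesq f g2.
Proof.
rewrite /sesq -big_split; apply: eq_bigr => p _; rewrite -big_split.
by apply: eq_bigr => q _; rewrite mulrDr scalerDl.
Qed.

Lemma sesqZl c f g : sesq (fun p => c * f p) g = Num.conj c *: sesq f g.
Proof.
rewrite /sesq scaler_sumr; apply: eq_bigr => p _; rewrite scaler_sumr.
by apply: eq_bigr => q _; rewrite rmorphM scalerA mulrA.
Qed.

Lemma sesqZr c f g : sesq f (fun q => c * g q) = c *: sesq f g.
Proof.
rewrite /sesq scaler_sumr; apply: eq_bigr => p _; rewrite scaler_sumr.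
by apply: eq_bigr => q _; rewrite scalerA mulrCA.
Qed.

Lemma sesq_delta p q : sesq (fun r => (r == p)%:R) (fun r => (r == q)%:R) = h p q.
Proof.
rewrite /sesq (eq_bigr (fun r => (r == p)%:R *: \sum_s ((s == q)%:R : C) *: h r s)).
  by rewrite !sum_delta_scale.
move=> r _; rewrite scaler_sumr; apply: eq_bigr => s _.
by rewrite conjC_nat scalerA.
Qed.

Lemma sesq_polar : (forall f, sesq f f = 0) -> h = 0.
Proof.
move=> sesq_ff; apply/matrixP => p q; rewrite mxE -(sesq_delta p q).
set dp := fun r => _; set dq := fun r => _.
have sym : sesq dp dq + sesq dq dp = 0.
  have := sesq_ff (fun r => dp r + dq r).
  by rewrite sesqDl !sesqDr !sesq_ff add0r addr0.
have asym : sesq dp dq - sesq dq dp = 0.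
  have := sesq_ff (fun r => dp r + 'i * dq r).
  rewrite sesqDl !sesqDr !sesqZl !sesqZr !sesq_ff !scaler0 add0r addr0 conjCi.
  move/(congr1 (fun w => - 'i *: w)); rewrite scaler0 scalerDr !scalerA.
  by rewrite mulNrii mulrNN -expr2 sqrCi scale1r scaleN1r.
have : (2 : C) *: sesq dp dq = 0.
  by rewrite scaler_nat mulr2n -[RHS](addr0 0) -{1}sym -asym addrACA subrr addr0.
by move/eqP; rewrite scaler_eq0 pnatr_eq0 /= => /eqP.
Qed.

End Polarization.

Section AccretiveCone.
Variables (C : numClosedFieldType) (W : lmodType C) (K : mfam W).
(* [mfam] is a dependent product, so [K] would otherwise get an implicit size index. *)
Arguments K : clear implicits.
Hypotheses (Kmc : matrix_cone K) (Kproper : C_proper K).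

Lemma coneD n (x y : 'M[W]_n.+1) : K n x -> K n y -> K n (x + y).
Proof. by case: Kmc => h _; case: (h n) => D _; apply: D. Qed.

Lemma coneZ n (t : C) (x : 'M[W]_n.+1) : 0 <= t -> K n x -> K n (mscale t x).
Proof. by case: Kmc => h _; case: (h n) => _ Z; apply: Z. Qed.

Lemma cone_conj_act n k (X : 'M[C]_(n.+1, k.+1)) x : K n x -> K k (conj_act X x).
Proof. by case: Kmc => _ h; apply: h. Qed.

Lemma smul_setE n (t s : C) (x : 'M[W]_n.+1) :
  s * t = 1 -> smul_set t (K n) x <-> K n (mscale s x).
Proof.
move=> st; split=> [[c [Kc ->]]|Ksx]; first by rewrite mscaleA st mscale1.
by exists (mscale s x); rewrite mscaleA mulrC st mscale1.
Qed.

Lemma ZsaE n (x : 'M[W]_n.+1) :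
  Zsa K x <-> K n (mscale (- 'i) x) /\ K n (mscale 'i x).
Proof.
by rewrite /Zsa (smul_setE x (mulNrii C)) (smul_setE x (mulrNii C)).
Qed.

Lemma ZsaD n (x y : 'M[W]_n.+1) : Zsa K x -> Zsa K y -> Zsa K (x + y).
Proof.
by move=> /ZsaE[Kx Kx'] /ZsaE[Ky Ky']; apply/ZsaE; rewrite !mscaleDr; split; apply: coneD.
Qed.

Lemma ZsaN n (x : 'M[W]_n.+1) : Zsa K x -> Zsa K (- x).
Proof. by move=> /ZsaE[Kx Kx']; apply/ZsaE; rewrite !mscalerN -!mscaleNr opprK. Qed.

Lemma ZsaZ n (r : C) (x : 'M[W]_n.+1) : r \is Num.real -> Zsa K x -> Zsa K (mscale r x).
Proof.
move=> /orP[r_ge0|r_le0] /ZsaE[Kx Kx']; apply/ZsaE; rewrite !mscaleA.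
  by rewrite ![_ * r]mulrC -!mscaleA; split; apply: coneZ.
have -> : - 'i * r = - r * 'i by rewrite !mulNr mulrC.
have -> : 'i * r = - r * - 'i by rewrite mulrNN mulrC.
by rewrite -!mscaleA; split; apply: coneZ; rewrite ?oppr_ge0.
Qed.

Lemma Zsa_conj_act n k (X : 'M[C]_(n.+1, k.+1)) x : Zsa K x -> Zsa K (conj_act X x).
Proof.
by move=> /ZsaE[Kx Kx']; apply/ZsaE; rewrite -!conj_act_mscale; split; apply: cone_conj_act.
Qed.

Lemma cone_proper n (x : 'M[W]_n.+1) : K n x -> K n (- x) ->
  K n (mscale 'i x) -> K n (mscale (- 'i) x) -> x = 0.
Proof.
move=> Kx KNx Kix KNix; apply: sesq_polar => f.
have /matrixP/(_ 0 0) : conj_act (\col_i f i) x = 0.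
  have conj_act_smul t s : s * t = 1 -> K n (mscale s x) ->
      smul_set t (K 0%N) (conj_act (\col_i f i) x).
    by move=> st Ksx; apply/(smul_setE _ st); rewrite -conj_act_mscale; apply: cone_conj_act.
  apply: Kproper; first exact: cone_conj_act.
  - by apply: (conj_act_smul _ (-1)); rewrite ?mulrNN ?mulr1 ?mscaleN1.
  - exact: conj_act_smul (mulNrii C) KNix.
  - exact: conj_act_smul (mulrNii C) Kix.
rewrite !mxE => <-.
by apply: eq_bigr => p _; apply: eq_bigr => q _; rewrite !mxE.
Qed.

Lemma Zsa_iZsa_eq0 n (x : 'M[W]_n.+1) : Zsa K x -> Zsa K (mscale 'i x) -> x = 0.
Proof.
move=> /ZsaE[KNix Kix] /ZsaE[]; rewrite !mscaleA mulNrii mscale1 -expr2 sqrCi mscaleN1.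
by move=> Kx KNx; apply: cone_proper.
Qed.

(* Z_sa^n may be empty (the empty family is a matrix cone), so [0] need not have
   a Cartesian decomposition; [cartesian0] describes span_C Z_sa^n. *)
Definition cartesian n (w : 'M[W]_n.+1) :=
  exists a b, Zsa K a /\ Zsa K b /\ w = a + mscale 'i b.

Definition cartesian0 n (w : 'M[W]_n.+1) := w = 0 \/ cartesian w.

Lemma Zsa_cartesian n (x : 'M[W]_n.+1) : Zsa K x -> cartesian x.
Proof.
move=> Zx; exists x, 0; split=> //; split; last by rewrite mscaler0 addr0.
by rewrite -(mscale0 x); apply: ZsaZ; rewrite ?real0.
Qed.

Lemma cartesianD n (x y : 'M[W]_n.+1) : cartesian x -> cartesian y -> cartesian (x + y).
Proof.
move=> [a [b [Za [Zb ->]]]] [c [d [Zc [Zd ->]]]].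
exists (a + c), (b + d); split; [|split]; try exact: ZsaD.
by rewrite mscaleDr addrACA.
Qed.

Lemma cartesianZ n c (x : 'M[W]_n.+1) : cartesian x -> cartesian (mscale c x).
Proof.
move=> [a [b [Za [Zb ->]]]].
have ZRe (y : 'M_n.+1) : Zsa K y -> Zsa K (mscale ('Re c) y) by apply/ZsaZ/Creal_Re.
have ZIm (y : 'M_n.+1) : Zsa K y -> Zsa K (mscale ('Im c) y) by apply/ZsaZ/Creal_Im.
exists (mscale ('Re c) a - mscale ('Im c) b), (mscale ('Im c) a + mscale ('Re c) b).
split; [|split].
- by apply: ZsaD; [apply: ZRe | apply/ZsaN/ZIm].
- by apply: ZsaD; [apply: ZIm | apply: ZRe].
have ci : c * 'i = 'i * 'Re c - 'Im c.
  by rewrite {1}[c]Crect mulrDl mulrAC -expr2 sqrCi mulN1r mulrC.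
rewrite mscaleDr !mscaleA ci {1}[c]Crect !mscaleDl mscaleNr mscaleDr !mscaleA.
by rewrite -!addrA; congr (_ + _); rewrite [RHS]addrC addrA.
Qed.

Lemma cartesian0_sum n I (r : seq I) (P : pred I) (F : I -> 'M[W]_n.+1) :
  (forall i, P i -> cartesian0 (F i)) -> cartesian0 (\sum_(i <- r | P i) F i).
Proof.
move=> cF; apply: (big_ind (@cartesian0 n)); [by left | | exact: cF].
move=> x y [->|cx]; first by rewrite add0r.
by case=> [->|cy]; right; rewrite ?addr0 //; apply: cartesianD.
Qed.

Lemma cartesian0Z n c (x : 'M[W]_n.+1) : cartesian0 x -> cartesian0 (mscale c x).
Proof. by case=> [->|cx]; [left; rewrite mscaler0 | right; apply: cartesianZ]. Qed.

Lemma Cspan_cartesian0 n (x : 'M[W]_n.+1) : Cspan (Zsa K (n:=n)) x -> cartesian0 x.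
Proof.
move=> [k [c [v [Zv ->]]]]; apply: cartesian0_sum => i _.
by apply: cartesian0Z; right; apply: Zsa_cartesian.
Qed.

Lemma cartesian_Cspan n (x : 'M[W]_n.+1) : cartesian x -> Cspan (Zsa K (n:=n)) x.
Proof.
move=> [a [b [Za [Zb ->]]]]; exists 2%N, (fun i => if val i == 0%N then 1 else 'i).
exists (fun i => if val i == 0%N then a else b); split; first by move=> i; case: ifP.
by rewrite !big_ord_recl big_ord0 addr0 mscale1.
Qed.

Lemma cartesian_unique n (a b c d : 'M[W]_n.+1) : Zsa K a -> Zsa K b ->
  Zsa K c -> Zsa K d -> a + mscale 'i b = c + mscale 'i d -> a = c /\ b = d.
Proof.
move=> Za Zb Zc Zd e.
have ei : mscale 'i (d - b) = a - c.
  by rewrite mscaleDr mscalerN -[a](addrK (mscale 'i b)) e addrAC (addrC c) addrK.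
have /eqP : d - b = 0.
  by apply: Zsa_iZsa_eq0; rewrite ?ei; apply: ZsaD => //; apply: ZsaN.
rewrite subr_eq0 => /eqP db; split => //.
by apply/eqP; rewrite -subr_eq0 -ei db subrr mscaler0.
Qed.

Lemma adj_spec n (w : 'M[W]_n.+1) :
  (exists a b, [/\ Zsa K a, Zsa K b, w = a + mscale 'i b & adj K w = a - mscale 'i b])
  \/ ~ cartesian w /\ adj K w = w.
Proof.
rewrite /adj; case: excluded_middle_informative => [cw|ncw]; last first.
  by right; split=> // -[a [b [Za [Zb e]]]]; apply: ncw; exists (a, b).
left; case: (constructive_indefinite_description _ cw) => -[a b] /= [Za [Zb e]].
by exists a, b.
Qed.

Lemma adj_cartesian n (a b : 'M[W]_n.+1) : Zsa K a -> Zsa K b ->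
  adj K (a + mscale 'i b) = a - mscale 'i b.
Proof.
move=> Za Zb; case: (adj_spec (a + mscale 'i b)) => [[c [d [Zc Zd e ->]]] | [ncw _]].
  by case: (cartesian_unique Za Zb Zc Zd e) => -> ->.
by case: ncw; exists a, b.
Qed.

Lemma adj0 n : adj K (0 : 'M[W]_n.+1) = 0.
Proof.
case: (adj_spec (0 : 'M[W]_n.+1)) => [[a [b [Za Zb e ->]]] | [_ ->]] //.
have b0 : b = 0.
  apply: Zsa_iZsa_eq0 => //; have -> : mscale 'i b = - a.
    by apply/eqP; rewrite -addr_eq0 addrC -e.
  exact: ZsaN.
by move: e; rewrite b0 mscaler0 !addr0 => <-; rewrite subr0.
Qed.

(* [w] and [adj w] differ by [2 i b] with [b] in Z_sa, and [i b], [-i b] lie in the cone. *)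
Lemma cone_addr_adj n (u w : 'M[W]_n.+1) : K n (u + adj K w) <-> K n (u + w).
Proof.
case: (adj_spec w) => [[a [b [_ /ZsaE[KNib Kib] -> ->]]] | [_ ->]] //.
split=> Ku.
  have -> : u + (a + mscale 'i b) = u + (a - mscale 'i b) + mscale 'i b + mscale 'i b.
    by rewrite -!addrA addKr.
  by do 2!apply: coneD => //.
have -> : u + (a - mscale 'i b) = u + (a + mscale 'i b) + mscale (- 'i) b + mscale (- 'i) b.
  by rewrite mscaleNr -!addrA addNKr.
by do 2!apply: coneD => //.
Qed.

Lemma adj_parts n (x y : 'M[W]_n.+1) : Zsa K (x - y) -> Zsa K (mscale 'i (x + y)) ->
  cartesian x /\ adj K x = - y.
Proof.
move=> Zd Zs; set a := mscale 2^-1 (x - y); set b := mscale (- 2^-1) (mscale 'i (x + y)).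
have Za : Zsa K a by apply: ZsaZ; rewrite ?rpredV ?realn.
have Zb : Zsa K b by apply: ZsaZ; rewrite ?rpredN ?rpredV ?realn.
have ib : mscale 'i b = mscale 2^-1 (x + y).
  by rewrite !mscaleA mulrAC -expr2 sqrCi mulN1r opprK.
have -> : x = a + mscale 'i b by rewrite ib -mscaleDr addrACA addNr addr0 mscale_half.
split; first by exists a, b.
rewrite adj_cartesian // ib -mscalerN -mscaleDr opprD addrACA.
by rewrite subrr add0r -opprD mscalerN mscale_half.
Qed.

Lemma cartesian_parts n (w : 'M[W]_n.+1) : cartesian w ->
  Zsa K (w + adj K w) /\ Zsa K (mscale 'i (w - adj K w)).
Proof.
move=> [a [b [Za [Zb ->]]]]; rewrite adj_cartesian //; split.
  by rewrite addrACA subrr addr0; apply: ZsaD.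
rewrite opprB [mscale 'i b - a]addrC addrACA subrr add0r mscaleDr !mscaleA.
rewrite -expr2 sqrCi mscaleN1.
by apply: ZsaD; apply: ZsaN.
Qed.

Definition delta_vmx n (p q : 'I_n.+1) (u : W) : 'M[W]_n.+1 :=
  \matrix_(i, j) ((((i == p)%:R * (j == q)%:R) : C) *: u).

(* By polarization, [delta_vmx p q (v 0 0)] is a combination of the compressions
   [f^* v f] of [v], which lie in Z_sa^n. *)
Lemma cartesian_delta_vmx n (v : 'M[W]_1) (p q : 'I_n.+1) :
  Zsa K v -> cartesian (delta_vmx p q (v 0 0)).
Proof.
move=> Zv; pose M (f : 'I_n.+1 -> C) := conj_act (\row_j f j : 'M[C]_(1, n.+1)) v.
have ZM f : Zsa K (M f) by apply: Zsa_conj_act.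
pose dp r := ((r == p)%:R : C); pose dq r := ((r == q)%:R : C).
pose A := M (fun r => dp r + dq r) - M dp - M dq.
pose B := M (fun r => dp r + 'i * dq r) - M dp - M dq.
have ZA : Zsa K A by apply: ZsaD; [apply: ZsaD => //|]; apply: ZsaN.
have ZB : Zsa K B by apply: ZsaD; [apply: ZsaD => //|]; apply: ZsaN.
exists (mscale 2^-1 A), (mscale (- 2^-1) B); split.
  by apply: ZsaZ; rewrite ?rpredV ?realn.
split; first by apply: ZsaZ; rewrite ?rpredN ?rpredV ?realn.
apply/matrixP => r s; rewrite !mxE !big_ord1 !mxE.
rewrite -!scalerBl !scalerA -scalerDl; congr (_ *: _).
have cD (x y : C) : (x + y)^* = x^* + y^* by rewrite rmorphD.
have cM (x y : C) : (x * y)^* = x^* * y^* by rewrite rmorphM.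
rewrite /dp /dq !cD !cM !conjC_nat conjCi.
move: ((r == p)%:R : C) ((r == q)%:R : C) ((s == p)%:R : C) ((s == q)%:R : C).
move: (sqrCi C); rewrite expr2; move: ('i : C) => j jj a b c d.
apply/eqP; rewrite -subr_eq0; apply/eqP.
set L := (X in X = 0).
have -> : L = 2^-1 * (a * d - b * c - j * b * d) * (1 + j * j) by rewrite /L; field.
by rewrite jj subrr mulr0.
Qed.

Hypothesis Ksa : self_adjoint K.

Lemma cartesian0_all n (w : 'M[W]_n.+1) : cartesian0 w.
Proof.
have -> : w = \sum_p \sum_q delta_vmx p q (w p q).
  apply/matrixP => r s; rewrite summxE (eq_bigr (fun p => ((p == r)%:R : C) *: w p s)).
    by rewrite sum_delta_scale.
  move=> p _; rewrite summxE.
  rewrite (eq_bigr (fun q => ((p == r)%:R : C) *: (((q == s)%:R : C) *: w p q))).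
    by rewrite -scaler_sumr sum_delta_scale.
  by move=> q _; rewrite !mxE scalerA (eq_sym r) (eq_sym s).
apply: cartesian0_sum => p _; apply: cartesian0_sum => q _.
case: (Ksa (w p q)) => k [c [v [Zv /matrixP/(_ 0 0)]]].
rewrite !mxE summxE => ->.
have -> : delta_vmx p q (\sum_i mscale (c i) (v i) 0 0) =
          \sum_i mscale (c i) (delta_vmx p q (v i 0 0)).
  apply/matrixP => r s; rewrite summxE !mxE scaler_sumr; apply: eq_bigr => i _.
  by rewrite !mxE !scalerA mulrC.
by apply: cartesian0_sum => i _; apply/cartesian0Z; right; apply: cartesian_delta_vmx.
Qed.

End AccretiveCone.

Lemma Cspan0 (C : numClosedFieldType) (W : lmodType C) n (P : 'M[W]_n.+1 -> Prop) :
  Cspan P 0.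
Proof. by exists 0%N, (fun _ => 0), (fun _ => 0); rewrite big_ord0; split=> //; case. Qed.

Section StarClosure.
Variables (C : numClosedFieldType) (Z V : lmodType C).
Variables (Zac : mfam Z) (Vac : mfam V) (phi : {linear Z -> V}).
Arguments Zac : clear implicits.
Arguments Vac : clear implicits.
Hypotheses (Zmc : matrix_cone Zac) (Zproper : C_proper Zac).
Hypotheses (Vmc : matrix_cone Vac) (Vproper : C_proper Vac) (Vsa : self_adjoint Vac).
Hypothesis phi_coe : real_coe Zac Vac phi.

Lemma map_mx_mscale m n c (x : 'M[Z]_(m, n)) :
  map_mx phi (mscale c x) = mscale c (map_mx phi x).
Proof. by apply/matrixP => i j; rewrite !mxE linearZ. Qed.

Lemma map_mx_phi_inj n : injective (@map_mx _ _ phi n n).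
Proof.
case: phi_coe => phi_inj _ x y /matrixP e; apply/matrixP => i j.
by apply: phi_inj; have := e i j; rewrite !mxE.
Qed.

Lemma Zsa_map_mx n (x : 'M[Z]_n.+1) : Zsa Vac (map_mx phi x) <-> Zsa Zac x.
Proof.
case: phi_coe => _ [phi_rcp phi_inv_rcp]; rewrite !ZsaE -!map_mx_mscale.
by split=> -[Kx Kx']; split; auto.
Qed.

Lemma star_closure_cone n (x y : 'M[Z]_n.+1) :
  Vac n (map_mx phi x + adj Vac (map_mx phi y)) <-> Zac n (x + y).
Proof.
case: phi_coe => _ [phi_rcp phi_inv_rcp].
by rewrite cone_addr_adj // -map_mxD; split; [apply: phi_inv_rcp | apply: phi_rcp].
Qed.

Lemma star_closure_eq0 n (x y : 'M[Z]_n.+1) :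
  map_mx phi x + adj Vac (map_mx phi y) = 0 ->
  [/\ Cspan (Zsa Zac (n:=n)) x, Cspan (Zsa Zac (n:=n)) y & y = - adj Zac x].
Proof.
move=> /eqP; rewrite addr_eq0 => /eqP phix.
case: (cartesian0_all Vmc Vsa (map_mx phi y)) => [phiy0 | cy].
  have y0 : y = 0 by apply: map_mx_phi_inj; rewrite phiy0 map_mx0.
  have x0 : x = 0 by apply: map_mx_phi_inj; rewrite phix phiy0 adj0 // oppr0 map_mx0.
  by rewrite x0 y0 adj0 // oppr0; split=> //; apply: Cspan0.
have [Zs Zd] := cartesian_parts Vmc Vproper cy.
have Zxy : Zsa Zac (x - y).
  by apply/Zsa_map_mx; rewrite map_mxB phix -opprD addrC; apply: ZsaN.
have Zixy : Zsa Zac (mscale 'i (x + y)).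
  by apply/Zsa_map_mx; rewrite map_mx_mscale map_mxD phix addrC.
have Zyx : Zsa Zac (y - x) by rewrite -opprB; apply: ZsaN.
have Ziyx : Zsa Zac (mscale 'i (y + x)) by rewrite addrC.
have [cx adjx] := adj_parts Zmc Zproper Zxy Zixy.
have [cy' _] := adj_parts Zmc Zproper Zyx Ziyx.
by split; rewrite ?adjx ?opprK //; apply: cartesian_Cspan.
Qed.

Lemma eq0_star_closure n (x : 'M[Z]_n.+1) : Cspan (Zsa Zac (n:=n)) x ->
  map_mx phi x + adj Vac (map_mx phi (- adj Zac x)) = 0.
Proof.
case/(Cspan_cartesian0 Zmc) => [-> | cx].
  by rewrite adj0 // oppr0 map_mx0 adj0 // addr0.
have [Zs Zd] := cartesian_parts Zmc Zproper cx.
have Zd' : Zsa Vac (map_mx phi (- adj Zac x) - map_mx phi x).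
  by rewrite -map_mxB -opprD addrC; apply/Zsa_map_mx/ZsaN.
have Zs' : Zsa Vac (mscale 'i (map_mx phi (- adj Zac x) + map_mx phi x)).
  by rewrite -map_mxD -map_mx_mscale addrC; apply/Zsa_map_mx.
by have [_ ->] := adj_parts Vmc Vproper Zd' Zs'; rewrite subrr.
Qed.

End StarClosure.

Theorem lemma2p8 (C : numClosedFieldType) (Z V : lmodType C)
  (Zac : mfam Z) (Vac : mfam V) (phi : {linear Z -> V}) :
  accretive_mos Zac -> star_closure Zac Vac phi ->
  forall (n : nat) (x y : 'M[Z]_n.+1),
    (Vac n (map_mx phi x + adj Vac (map_mx phi y)) <-> Zac n (x + y)) /\
    (map_mx phi x + adj Vac (map_mx phi y) = 0 <->
       Cspan (Zsa Zac (n:=n)) x /\ Cspan (Zsa Zac (n:=n)) y /\ y = - adj Zac x).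
Proof.
move=> [Zmc Zproper] [[Vmc Vproper] [Vsa [phi_coe _]]] n x y.
split; first exact: star_closure_cone.
split=> [/(star_closure_eq0 Zmc Zproper Vmc Vproper Vsa phi_coe)[] // | [Cx [_ ->]]].
exact: eq0_star_closure.
Qed.
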